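(* Let $H_1,H_2$ be separable Hilbert spaces, $K\in B(H_1)$ and $L\in B(H_2)$. Then there exist a $K$-frame $\{x_n\}_{n\geqslant1}$ for $H_1$ and an $L$-frame $\{y_n\}_{n\geqslant1}$ for $H_2$ such that $\{x_n\oplus y_n\}_{n\geqslant1}$ is a $K\oplus L$-frame for $H_1\oplus H_2$.
   Context: $H_1\oplus H_2$ is the Hilbert space of pairs $x\oplus y$ with inner product $\langle x\oplus y,a\oplus b\rangle=\langle x,a\rangle+\langle y,b\rangle$. $K\oplus L\in B(H_1\oplus H_2)$ is defined by $(K\oplus L)(x\oplus y)=K(x)\oplus L(y)$. For a Hilbert space $H$ and $K\in B(H)$, a sequence $\{z_n\}_{n\geqslant1}$ in $H$ is a $K$-frame if there are $A,B>0$ with $A\|K^*z\|^2\leq\sum_{n=1}^\infty|\langle z,z_n\rangle|^2\leq B\|z\|^2$ for all $z\in H$. *)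

From HB Require Import structures.
From mathcomp Require Import all_boot all_order all_algebra.
From mathcomp Require Import all_classical all_reals all_analysis.
From mathcomp Require Import complex.
Set Implicit Arguments. Unset Strict Implicit. Unset Printing Implicit Defensive.
Import Order.TTheory GRing.Theory Num.Theory.
Local Open Scope ring_scope.

Section Hilbert.
Variable R : realType.
Local Notation C := R[i].
Variable V : lmodType C.
(* inner product, linear in the first argument *)
Variable ip : V -> V -> C.

(* squared norm ||x||^2 = <x,x> (a nonnegative real) *)
Definition nsq (x : V) : R := complex.Re (ip x x).

Definition inner_product : Prop :=
  [/\ (forall (a : C) (x y z : V), ip (a *: x + y) z = a * ip x z + ip y z),
      (forall x y : V, ip y x = conjc (ip x y)),
      (forall x : V, 0 <= nsq x) &
      (forall x : V, nsq x = 0 -> x = 0)].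

Definition complete_ip : Prop :=
  forall u : nat -> V,
    (forall e : R, 0 < e -> exists N, forall m n, (N <= m)%N -> (N <= n)%N ->
        nsq (u m - u n) < e) ->
    exists l : V, forall e : R, 0 < e -> exists N, forall n, (N <= n)%N ->
        nsq (u n - l) < e.

Definition hilbert : Prop := inner_product /\ complete_ip.

Definition separable : Prop :=
  exists d : nat -> V, forall (x : V) (e : R), 0 < e -> exists n, nsq (x - d n) < e.

Definition bounded_op (K : V -> V) : Prop :=
  (forall (a : C) (x y : V), K (a *: x + y) = a *: K x + K y) /\
  exists M : R, forall x, nsq (K x) <= M * nsq x.

Definition is_adjoint (K Ks : V -> V) : Prop :=
  forall x y : V, ip (K x) y = ip x (Ks y).

(* sum_{n>=1} |<z, z_n>|^2 as an extended real (terms are nonnegative) *)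
Definition frame_sum (zs : nat -> V) (z : V) : \bar R :=
  (\sum_(n <oo) ((Normc.normc (ip z (zs n))) ^+ 2)%:E)%E.

(* {z_n} is a K-frame: A ||K^* z||^2 <= sum |<z,z_n>|^2 <= B ||z||^2;
   K^* is any (= the) adjoint of K *)
Definition Kframe (K : V -> V) (zs : nat -> V) : Prop :=
  exists A B : R, 0 < A /\ 0 < B /\
    forall z : V,
      (forall Ks, is_adjoint K Ks -> ((A * nsq (Ks z))%:E <= frame_sum zs z)%E) /\
      (frame_sum zs z <= (B * nsq z)%:E)%E.
End Hilbert.

Definition ip_sum (R : realType) (V1 V2 : lmodType R[i])
  (ip1 : V1 -> V1 -> R[i]) (ip2 : V2 -> V2 -> R[i]) : (V1 * V2)%type -> (V1 * V2)%type -> R[i] :=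
  fun p q => ip1 p.1 q.1 + ip2 p.2 q.2.

Definition op_sum (V1 V2 : Type) (K : V1 -> V1) (L : V2 -> V2) : (V1 * V2)%type -> (V1 * V2)%type :=
  fun p => (K p.1, L p.2).

From Pilot Require Import Defs.
From HB Require Import structures.
From mathcomp Require Import all_boot all_order all_algebra.
From mathcomp Require Import all_classical all_reals all_analysis.
From mathcomp Require Import complex.
From mathcomp Require Import ring lra.
Set Implicit Arguments. Unset Strict Implicit. Unset Printing Implicit Defensive.
Import Order.TTheory GRing.Theory Num.Theory.
Local Open Scope ring_scope.
Local Open Scope complex_scope.

(* Gram-Schmidt applied to a dense sequence of H1 (+) H2 gives a Parseval
   frame (g_n) of H1 (+) H2, i.e. sum_n |<z, g_n>|^2 = ||z||^2: Bessel's
   inequality gives <=, and approximating z by the dense sequence gives >=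
   (no completeness is needed).  Testing against z (+) 0 and 0 (+) z shows that
   the coordinate sequences of (g_n) are Parseval frames of H1 and H2.  Finally,
   a Parseval frame is a K-frame for every bounded K: if ||K x||^2 <= M ||x||^2
   then ||K^* z||^2 <= M ||z||^2, so A = 1/M and B = 1 work. *)

Lemma sqr_normc (R : realType) (c : R[i]) :
  Normc.normc c ^+ 2 = complex.Re c ^+ 2 + complex.Im c ^+ 2.
Proof. by case: c => a b /=; rewrite sqr_sqrtr // addr_ge0 // sqr_ge0. Qed.

Lemma mulcJ_normc (R : realType) (c : R[i]) :
  c * conjc c = (Normc.normc c ^+ 2)%:C.
Proof.
rewrite sqr_normc; case: c => a b /=; simpc.
by apply/eqP; rewrite eq_complex /= !expr2; apply/andP; split; apply/eqP; ring.
Qed.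

Lemma ReD (R : realType) (x y : R[i]) :
  complex.Re (x + y) = complex.Re x + complex.Re y.
Proof. exact: (raddfD (@complex.Re R : Rcomplex R -> R)). Qed.

Lemma ReB (R : realType) (x y : R[i]) :
  complex.Re (x - y) = complex.Re x - complex.Re y.
Proof. exact: (raddfB (@complex.Re R : Rcomplex R -> R)). Qed.

Lemma Re_sum (R : realType) (I : Type) (r : seq I) (P : pred I) (F : I -> R[i]) :
  complex.Re (\sum_(i <- r | P i) F i) = \sum_(i <- r | P i) complex.Re (F i).
Proof. exact: (raddf_sum (@complex.Re R : Rcomplex R -> R)). Qed.

Section InnerProduct.
Variable R : realType.
Variable V : lmodType R[i].
Variable ip : V -> V -> R[i].
Hypothesis hip : inner_product ip.
Local Notation nsq := (nsq ip).

Lemma ipDZl a x y z : ip (a *: x + y) z = a * ip x z + ip y z.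
Proof. by case: hip. Qed.

Lemma ipC x y : ip y x = conjc (ip x y).
Proof. by case: hip. Qed.

Lemma nsq_ge0 x : 0 <= nsq x.
Proof. by case: hip. Qed.

Lemma nsq_eq0 x : nsq x = 0 -> x = 0.
Proof. by case: hip => _ _ _; apply. Qed.

Lemma ip0l z : ip 0 z = 0.
Proof.
have := ipDZl 1 0 0 z; rewrite scaler0 addr0 mul1r -{1}[ip 0 z]addr0.
by move/addrI.
Qed.

Lemma ipDl x y z : ip (x + y) z = ip x z + ip y z.
Proof. by have := ipDZl 1 x y z; rewrite scale1r mul1r. Qed.

Lemma ipZl a x z : ip (a *: x) z = a * ip x z.
Proof. by have := ipDZl a x 0 z; rewrite addr0 ip0l addr0. Qed.

Lemma ipBl x y z : ip (x - y) z = ip x z - ip y z.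
Proof. by rewrite ipDl -scaleN1r ipZl mulN1r. Qed.

Lemma ip0r z : ip z 0 = 0.
Proof. by rewrite ipC ip0l conjc0. Qed.

Lemma ipDr x y z : ip z (x + y) = ip z x + ip z y.
Proof. by rewrite [LHS]ipC ipDl raddfD /= -!ipC. Qed.

Lemma ipZr a x z : ip z (a *: x) = conjc a * ip z x.
Proof. by rewrite [LHS]ipC ipZl rmorphM /= -ipC. Qed.

Lemma ipBr x y z : ip z (x - y) = ip z x - ip z y.
Proof. by rewrite [LHS]ipC ipBl raddfB /= -!ipC. Qed.

Lemma ip_suml (I : Type) (r : seq I) (P : pred I) (F : I -> V) z :
  ip (\sum_(i <- r | P i) F i) z = \sum_(i <- r | P i) ip (F i) z.
Proof. by apply: (big_morph (ip^~ z)) => [x y|]; rewrite ?ipDl ?ip0l. Qed.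

Lemma ip_sumr (I : Type) (r : seq I) (P : pred I) (F : I -> V) z :
  ip z (\sum_(i <- r | P i) F i) = \sum_(i <- r | P i) ip z (F i).
Proof. by apply: (big_morph (ip z)) => [x y|]; rewrite ?ipDr ?ip0r. Qed.

Lemma ipxx x : ip x x = (nsq x)%:C.
Proof.
have := ipC x x; rewrite /Defs.nsq; case: (ip x x) => a b /= [hb].
by have -> : b = 0 by lra.
Qed.

Lemma nsq0 : nsq 0 = 0.
Proof. by rewrite /Defs.nsq ip0l. Qed.

Definition proj (e : nat -> V) N u := \sum_(k < N) ip u (e k) *: e k.

(* Zero vectors are allowed: Gram-Schmidt produces 0 from a vector that is
   already spanned by its predecessors. *)
Definition orthonormal_upto (e : nat -> V) N :=
  (forall j k, (j < N)%N -> (k < N)%N -> j != k -> ip (e j) (e k) = 0) /\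
  (forall k, (k < N)%N -> e k = 0 \/ ip (e k) (e k) = 1).

Section Bessel.
Variables (e : nat -> V) (N : nat).
Hypothesis eON : orthonormal_upto e N.

Lemma ip_proj_e u k : (k < N)%N -> ip (proj e N u) (e k) = ip u (e k).
Proof.
move=> kN; rewrite /proj ip_suml (bigD1 (Ordinal kN)) //= big1 ?addr0.
  rewrite ipZl; case: eON => _ /(_ k kN) [->|->]; last by rewrite mulr1.
  by rewrite ip0r mul0r.
by move=> j hj; rewrite ipZl (proj1 eON j k) ?mulr0.
Qed.

Lemma ip_res_e u k : (k < N)%N -> ip (u - proj e N u) (e k) = 0.
Proof. by move=> kN; rewrite ipBl ip_proj_e // subrr. Qed.

Lemma ip_res_proj u v : ip (u - proj e N u) (proj e N v) = 0.
Proof. by rewrite /proj ip_sumr big1 // => k _; rewrite ipZr ip_res_e ?mulr0. Qed.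

Let coef_sum u := \sum_(k < N) (Normc.normc (ip u (e k)) ^+ 2)%:C.

Lemma ip_proj_l u : ip (proj e N u) u = coef_sum u.
Proof.
rewrite /proj ip_suml; apply: eq_bigr => k _.
by rewrite ipZl [ip (e k) u]ipC mulcJ_normc.
Qed.

Lemma ip_proj_r u : ip u (proj e N u) = coef_sum u.
Proof.
rewrite ipC ip_proj_l rmorph_sum; apply: eq_bigr => k _.
exact: conjc_real.
Qed.

Lemma ip_proj_proj u : ip (proj e N u) (proj e N u) = coef_sum u.
Proof.
have /eqP := ip_res_proj u u.
by rewrite ipBl ip_proj_r subr_eq0 => /eqP <-.
Qed.

Lemma bessel u :
  nsq (u - proj e N u) = nsq u - \sum_(k < N) Normc.normc (ip u (e k)) ^+ 2.
Proof.
have res_res : ip (u - proj e N u) (u - proj e N u) = ip u u - coef_sum u.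
  by rewrite !ipBl !ipBr ip_proj_r ip_proj_l ip_proj_proj subrr subr0.
by rewrite /Defs.nsq res_res ReB Re_sum.
Qed.

Lemma bessel_le u : \sum_(k < N) Normc.normc (ip u (e k)) ^+ 2 <= nsq u.
Proof. by rewrite -subr_ge0 -bessel nsq_ge0. Qed.

End Bessel.

Lemma projB e N u v : proj e N (u - v) = proj e N u - proj e N v.
Proof. by rewrite /proj -sumrB; apply: eq_bigr => k _; rewrite ipBl scalerBl. Qed.

Definition normalize (w : V) : V := ((Num.sqrt (nsq w))^-1)%:C *: w.

Lemma sqr_invsqrt_mul (x : R) : x != 0 -> 0 <= x -> (Num.sqrt x)^-1 ^+ 2 * x = 1.
Proof. by move=> x0 x_ge0; rewrite exprVn sqr_sqrtr // mulVf. Qed.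

Lemma normalize_orth w v : ip w v = 0 -> ip (normalize w) v = 0.
Proof. by move=> wv; rewrite ipZl wv mulr0. Qed.

Lemma normalize_unit w : normalize w = 0 \/ ip (normalize w) (normalize w) = 1.
Proof.
have [w0|w0] := eqVneq (nsq w) 0; first by left; rewrite /normalize (nsq_eq0 w0) scaler0.
right; rewrite ipZl ipZr conjc_real ipxx -!rmorphM /= mulrA -expr2.
by rewrite sqr_invsqrt_mul ?nsq_ge0.
Qed.

Lemma normalizeK w : ip w (normalize w) *: normalize w = w.
Proof.
have [w0|w0] := eqVneq (nsq w) 0; first by rewrite (nsq_eq0 w0) ip0l scale0r.
rewrite ipZr scalerA conjc_real ipxx -!rmorphM /= mulrAC -expr2.
by rewrite sqr_invsqrt_mul ?nsq_ge0 // scale1r.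
Qed.

Definition parseval (e : nat -> V) := forall z, frame_sum ip e z = (nsq z)%:E.

Section GramSchmidt.
Variable d : nat -> V.

Fixpoint gram_schmidt_upto (n : nat) : nat -> V :=
  if n is m.+1 then fun k =>
    if k == m then normalize (d m - proj (gram_schmidt_upto m) m (d m))
    else gram_schmidt_upto m k
  else fun _ => 0.

Definition gram_schmidt k := gram_schmidt_upto k.+1 k.
Local Notation gs := gram_schmidt.

Lemma gram_schmidt_uptoE n k : (k < n)%N -> gram_schmidt_upto n k = gs k.
Proof.
elim: n => // n IH; rewrite ltnS leq_eqVlt => /predU1P [-> //| kn] /=.
by rewrite ltn_eqF // IH.
Qed.

Lemma gram_schmidtE n : gs n = normalize (d n - proj gs n (d n)).
Proof.
rewrite {1}/gs /= eqxx /proj; congr (normalize (_ - _)).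
by apply: eq_bigr => k _; rewrite gram_schmidt_uptoE.
Qed.

Lemma gram_schmidt_orthonormal N : orthonormal_upto gs N.
Proof.
elim: N => [|n [IHorth IHunit]]; first by split.
have orth_n k : (k < n)%N -> ip (gs n) (gs k) = 0.
  move=> kn; rewrite gram_schmidtE normalize_orth //.
  exact: (ip_res_e (conj IHorth IHunit)).
split => [j k|k].
  rewrite ltnS leq_eqVlt => /predU1P [-> | jn];
    rewrite ltnS leq_eqVlt => /predU1P [-> | kn].
  - by rewrite eqxx.
  - by move=> _; apply: orth_n.
  - by move=> _; rewrite ipC orth_n // conjc0.
  - exact: IHorth.
rewrite ltnS leq_eqVlt => /predU1P [-> | /IHunit //].
by rewrite gram_schmidtE; apply: normalize_unit.
Qed.

Lemma proj_gram_schmidt_S n : proj gs n.+1 (d n) = d n.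
Proof.
rewrite /proj big_ord_recr /= -/(proj gs n (d n)).
set w := d n - proj gs n (d n).
have coef_w : ip (d n) (gs n) = ip w (gs n).
  rewrite /w ipBl [ip (proj _ _ _) _]ipC gram_schmidtE normalize_orth.
    by rewrite conjc0 subr0.
  exact/ip_res_proj/gram_schmidt_orthonormal.
by rewrite coef_w [gs n]gram_schmidtE -/w normalizeK /w addrC subrK.
Qed.

Lemma proj_gram_schmidt n N : (n < N)%N -> proj gs N (d n) = d n.
Proof.
have res_le m : nsq (d n - proj gs m.+1 (d n)) <= nsq (d n - proj gs m (d n)).
  rewrite !(bessel (gram_schmidt_orthonormal _)) (big_ord_recr m) /=.
  by rewrite opprD addrA lerBlDr lerDl sqr_ge0.
have res_le0 m : (n < m)%N -> nsq (d n - proj gs m (d n)) <= 0.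
  elim: m => // m IH; rewrite ltnS leq_eqVlt => /predU1P [<- | nm].
    by rewrite proj_gram_schmidt_S subrr nsq0.
  exact: le_trans (res_le m) (IH nm).
move=> nN; apply/eqP; rewrite eq_sym -subr_eq0; apply/eqP/nsq_eq0.
by apply/eqP; rewrite eq_le res_le0 ?nsq_ge0.
Qed.

Hypothesis d_dense : forall (x : V) (eps : R), 0 < eps -> exists n, nsq (x - d n) < eps.

Lemma gram_schmidt_parseval : parseval gs.
Proof.
have coef_ge0 k z : (0 <= (Normc.normc (ip z (gs k)) ^+ 2)%:E)%E.
  by rewrite lee_fin sqr_ge0.
move=> z; apply/eqP; rewrite eq_le; apply/andP; split.
  apply: lime_le; first exact: is_cvg_nneseries.
  apply: nearW => N; rewrite big_mkord sumEFin lee_fin.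
  exact: bessel_le (gram_schmidt_orthonormal N) z.
(* As d n lies in the span of gs 0, ..., gs n, the residual of z after
   projecting onto that span is the residual of z - d n, of norm < eps. *)
apply/lee_subgt0Pr => eps eps0; have [n hn] := d_dense z eps0.
apply: le_trans (nneseries_lim_ge n.+1 _) => //.
rewrite big_mkord sumEFin -EFinB lee_fin lerBlDr -lerBlDl.
rewrite -(bessel (gram_schmidt_orthonormal _)).
have -> : z - proj gs n.+1 z = (z - d n) - proj gs n.+1 (z - d n).
  by rewrite projB proj_gram_schmidt // opprB addrA subrK.
apply: le_trans (ltW hn).
rewrite (bessel (gram_schmidt_orthonormal _)) lerBlDr lerDl.
by rewrite sumr_ge0 // => k _; rewrite sqr_ge0.
Qed.

End GramSchmidt.

Lemma separable_parseval : separable ip -> exists e, parseval e.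
Proof. by move=> [d d_dense]; exists (gram_schmidt d); apply: gram_schmidt_parseval. Qed.

(* Bessel's inequality for the single vector [normalize b]. *)
Lemma cauchy_schwarz a b : Normc.normc (ip a b) ^+ 2 <= nsq a * nsq b.
Proof.
have [b0|b0] := eqVneq (nsq b) 0.
  by rewrite (nsq_eq0 b0) ip0r Normc.normc0 expr0n /= nsq0 mulr0.
pose e k : V := if k == 0%N then normalize b else 0.
have eON : orthonormal_upto e 1.
  by split=> [[|j] [|k] | [|k]] //= _; apply: normalize_unit.
have := bessel_le eON a; rewrite big_ord1 /e /= /normalize.
rewrite ipZr conjc_real Normc.normcM exprMn sqr_normc /= expr0n /= addr0.
move=> /(ler_wpM2r (nsq_ge0 b)).
by rewrite (sqr_sqrtr (sqr_ge0 _)) mulrAC sqr_invsqrt_mul ?nsq_ge0 // mul1r.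
Qed.

Lemma bounded_op_pos (K : V -> V) : bounded_op ip K ->
  exists2 M : R, 0 < M & forall x, nsq (K x) <= M * nsq x.
Proof.
move=> [_ [M KM]]; exists (`|M| + 1) => [|x]; first by rewrite ltr_wpDl.
apply: le_trans (KM x) _; rewrite ler_wpM2r ?nsq_ge0 //.
by rewrite (le_trans (ler_norm M)) ?lerDl.
Qed.

Lemma nsq_adjoint_le (K Ks : V -> V) (M : R) : 0 < M ->
  (forall x, nsq (K x) <= M * nsq x) -> is_adjoint ip K Ks ->
  forall z, nsq (Ks z) <= M * nsq z.
Proof.
move=> M0 KM KKs z; set y := Ks z.
have ny : nsq y = complex.Re (ip (K y) z) by rewrite KKs -/y ipxx.
have ny_sqr : nsq y ^+ 2 <= M * nsq y * nsq z.
  rewrite {1}ny; apply: (le_trans (y := Normc.normc (ip (K y) z) ^+ 2)).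
    by rewrite sqr_normc lerDl sqr_ge0.
  by apply: le_trans (cauchy_schwarz _ _) _; rewrite ler_wpM2r ?nsq_ge0 ?KM.
have [y0|y0] := eqVneq (nsq y) 0; first by rewrite y0 mulr_ge0 ?nsq_ge0 ?ltW.
have y_gt0 : 0 < nsq y by rewrite lt_neqAle eq_sym y0 nsq_ge0.
by rewrite -(ler_pM2l y_gt0) -expr2 mulrA [nsq y * M]mulrC.
Qed.

Lemma parseval_Kframe (e : nat -> V) K : bounded_op ip K -> parseval e ->
  Kframe ip K e.
Proof.
move=> /bounded_op_pos [M M0 KM] e_parseval; exists M^-1, 1.
split; first by rewrite invr_gt0.
split=> // z; split; last by rewrite e_parseval mul1r.
move=> Ks KKs; rewrite e_parseval lee_fin mulrC ler_pdivrMr // mulrC.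
exact: nsq_adjoint_le KKs z.
Qed.

End InnerProduct.

Section DirectSum.
Variable R : realType.
Variables V1 V2 : lmodType R[i].
Variables (ip1 : V1 -> V1 -> R[i]) (ip2 : V2 -> V2 -> R[i]).
Hypotheses (hip1 : inner_product ip1) (hip2 : inner_product ip2).
Local Notation ips := (ip_sum ip1 ip2).

Lemma nsq_sum (p : (V1 * V2)%type) : nsq ips p = nsq ip1 p.1 + nsq ip2 p.2.
Proof. exact: ReD. Qed.

Lemma inner_product_sum : inner_product ips.
Proof.
split.
- by move=> a x y z; rewrite /ip_sum /= (ipDZl hip1) (ipDZl hip2); ring.
- by move=> x y; rewrite /ip_sum raddfD /= -(ipC hip1) -(ipC hip2).
- by move=> x; rewrite nsq_sum addr_ge0 ?(nsq_ge0 hip1) ?(nsq_ge0 hip2).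
- move=> [x1 x2]; rewrite nsq_sum /= => /eqP.
  rewrite paddr_eq0 ?(nsq_ge0 hip1) ?(nsq_ge0 hip2) // => /andP [/eqP x10 /eqP x20].
  by rewrite (nsq_eq0 hip1 x10) (nsq_eq0 hip2 x20).
Qed.

Lemma separable_sum : separable ip1 -> separable ip2 -> separable ips.
Proof.
move=> [d1 d1_dense] [d2 d2_dense].
pose d n : (V1 * V2)%type :=
  if @unpickle (nat * nat)%type n is Some ij then (d1 ij.1, d2 ij.2) else 0.
exists d => [[x1 x2]] eps eps0.
have eps2 : 0 < eps / 2 by rewrite divr_gt0.
have [i hi] := d1_dense x1 _ eps2; have [j hj] := d2_dense x2 _ eps2.
by exists (pickle (i, j)); rewrite /d pickleK nsq_sum /=; lra.
Qed.

Lemma bounded_op_sum K L : bounded_op ip1 K -> bounded_op ip2 L ->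
  bounded_op ips (op_sum K L).
Proof.
move=> hK hL; split=> [a x y|]; first by rewrite /op_sum /= (proj1 hK) (proj1 hL).
have [M1 M1_gt0 KM1] := bounded_op_pos hip1 hK.
have [M2 M2_gt0 LM2] := bounded_op_pos hip2 hL.
exists (M1 + M2) => [[x1 x2]]; rewrite !nsq_sum /=.
have := KM1 x1; have := LM2 x2; have := nsq_ge0 hip1 x1; have := nsq_ge0 hip2 x2.
nra.
Qed.

Lemma parseval_fst (g : nat -> (V1 * V2)%type) :
  parseval ips g -> parseval ip1 (fun n => (g n).1).
Proof.
move=> g_parseval z; have := g_parseval (z, 0).
rewrite nsq_sum /= (nsq0 hip2) addr0 => <-; apply: eq_eseriesr => n _.
by rewrite /ip_sum /= (ip0l hip2) addr0.
Qed.

Lemma parseval_snd (g : nat -> (V1 * V2)%type) :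
  parseval ips g -> parseval ip2 (fun n => (g n).2).
Proof.
move=> g_parseval z; have := g_parseval (0, z).
rewrite nsq_sum /= (nsq0 hip1) add0r => <-; apply: eq_eseriesr => n _.
by rewrite /ip_sum /= (ip0l hip1) add0r.
Qed.

End DirectSum.

Theorem corollary2p6 (R : realType) (V1 V2 : lmodType R[i])
  (ip1 : V1 -> V1 -> R[i]) (ip2 : V2 -> V2 -> R[i])
  (H1 : hilbert ip1) (H2 : hilbert ip2)
  (S1 : separable ip1) (S2 : separable ip2)
  (K : V1 -> V1) (L : V2 -> V2)
  (hK : bounded_op ip1 K) (hL : bounded_op ip2 L) :
  exists (x : nat -> V1) (y : nat -> V2),
    [/\ Kframe ip1 K x, Kframe ip2 L y &
        Kframe (ip_sum ip1 ip2) (op_sum K L) (fun n => (x n, y n))].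
Proof.
have [hip1 _] := H1; have [hip2 _] := H2.
have hips := inner_product_sum hip1 hip2.
have [g g_parseval] := separable_parseval hips (separable_sum S1 S2).
exists (fun n => (g n).1), (fun n => (g n).2); split.
- exact/(parseval_Kframe hip1 hK)/(parseval_fst hip2 g_parseval).
- exact/(parseval_Kframe hip2 hL)/(parseval_snd hip1 g_parseval).
- apply: (parseval_Kframe hips (bounded_op_sum hip1 hip2 hK hL)).
  by move=> z; rewrite -g_parseval; congr frame_sum; apply: funext => n; case: (g n).
Qed.
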